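(* Let $(X,d)$ be a metric space and $\ell:X\to[0,+\infty]$ a lower semicontinuous function satisfying hypothesis $(H_0)$. Then there is a lower semicontinuous function $u:X\to\mathbb{R}\cup\{+\infty\}$ with $\inf_Xu=0$ and $G[u](x)=\ell(x)$ for all $x\in X$.
   Context: Global slope: for $u:X\to\mathbb{R}\cup\{+\infty\}$, $G[u](x)=\sup_{y\neq x}\frac{(u(x)-u(y))_+}{d(x,y)}$ if $u(x)<+\infty$ and $G[u](x)=+\infty$ otherwise ($\alpha_+=\max\{\alpha,0\}$). Hypothesis $(H_0)$: there is a sequence $\{\bar x_n\}_n\subset X$ with $\sum_{n=0}^\infty\ell(\bar x_n)d(\bar x_n,\bar x_{n+1})<+\infty$ and $\lim_{n\to\infty}\ell(\bar x_n)=0$. *)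

From HB Require Import structures.
From mathcomp Require Import all_boot all_order all_algebra.
From mathcomp Require Import all_classical all_reals all_analysis.
Set Implicit Arguments. Unset Strict Implicit. Unset Printing Implicit Defensive.
Import Order.TTheory GRing.Theory Num.Theory.
Local Open Scope classical_set_scope.
Local Open Scope ring_scope.

Definition is_metric (R : realType) (X : Type) (d : X -> X -> R) : Prop :=
  (forall x y, 0 <= d x y) /\
  (forall x y, d x y = 0 <-> x = y) /\
  (forall x y, d x y = d y x) /\
  (forall x y z, d x z <= d x y + d y z).

Definition lsc_metric (R : realType) (X : Type) (d : X -> X -> R)
  (f : X -> \bar R) : Prop :=
  forall x (t : R), (t%:E < f x)%E ->
    exists2 delta : R, 0 < delta & forall y, d x y < delta -> (t%:E < f y)%E.

(* global slope G[u](x) = sup_{y <> x} (u x - u y)_+ / d(x,y) if u x < +oo,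
   and +oo otherwise; the supremum of the (nonnegative) quotients is taken
   with the convention sup of the empty family = 0 (only relevant when X is
   a singleton), implemented by adjoining 0 to the set. *)
Definition global_slope (R : realType) (X : Type) (d : X -> X -> R)
  (u : X -> \bar R) (x : X) : \bar R :=
  if u x == +oo%E then +oo%E
  else ereal_sup ([set (maxe (u x - u y) 0 * ((d x y)^-1)%:E)%E | y in [set y | y <> x]]
                  `|` [set 0%E]).

Definition H0 (R : realType) (X : Type) (d : X -> X -> R) (l : X -> \bar R) : Prop :=
  exists xb : nat -> X,
    (\sum_(0 <= n <oo) (l (xb n) * (d (xb n) (xb n.+1))%:E) < +oo)%E /\
    (l \o xb @ \oo --> 0%E).

From HB Require Import structures.
From mathcomp Require Import all_boot all_order all_algebra.
From mathcomp Require Import all_classical all_reals all_analysis.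
From mathcomp Require Import ring lra.
Import Order.TTheory GRing.Theory Num.Theory.
Local Open Scope classical_set_scope.
Local Open Scope ring_scope.
Set Implicit Arguments. Unset Strict Implicit.

(* [u x] is the least cost [sum_i l (p i) * d (p i) (p i.+1)] of a path [p]
   from [x] along which [l] tends to [0], relaxed to paths starting within [e]
   of [x] for every [e > 0]; the relaxation makes [u] lower semicontinuous.
   The path of (H0) and its tails make [u] finite wherever [l] is and give
   [inf u = 0].  Prepending [x] to paths from near [y] gives
   [u x <= l x * d x y + u y], i.e. [G[u] <= l].  Conversely, if [l > t] on the
   ball of radius [delta] around [x], a nearly optimal path from near [x] pays
   at least [t] per unit length until it first leaves that ball, at some [y];
   so [u x - u y] is almost [t * d x y] with [d x y >= delta], and
   [G[u](x) >= t]. *)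

Lemma EFin_lt_between (R : realFieldType) (s : R) (e : \bar R) : (s%:E < e)%E ->
  exists2 t : R, s < t & (t%:E < e)%E.
Proof.
case: e => [r| |] //= sr; last by exists (s + 1); [lra | exact: ltry].
by rewrite lte_fin in sr; exists ((s + r) / 2); rewrite ?lte_fin; lra.
Qed.

Section CostPotential.
Variables (R : realType) (X : Type) (d : X -> X -> R) (l : X -> \bar R).
Hypothesis d_metric : is_metric d.
Hypothesis l_ge0 : forall x, (0 <= l x)%E.

Let d_ge0 x y : 0 <= d x y. Proof. by case: d_metric. Qed.
Let d_xx x : d x x = 0. Proof. by case: d_metric => _ [/(_ x x) [_ ->]]. Qed.
Let d_triangle x y z : d x z <= d x y + d y z.
Proof. by case: d_metric => _ [_ [_]]. Qed.

Let d_gt0 x y : y <> x -> 0 < d x y.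
Proof.
move=> yx; rewrite lt_neqAle d_ge0 andbT eq_sym; apply/eqP => /(proj1 d_metric.2).
by move/esym.
Qed.

Definition path_cost (p : nat -> X) : \bar R :=
  (\sum_(0 <= i <oo) (l (p i) * (d (p i) (p i.+1))%:E))%E.

Definition admissible (p : nat -> X) : Prop := (l \o p @ \oo --> 0%E).

Let cost_term_ge0 (p : nat -> X) i : (0 <= l (p i) * (d (p i) (p i.+1))%:E)%E.
Proof. by rewrite mule_ge0 ?lee_fin. Qed.

Lemma path_cost_ge0 p : (0 <= path_cost p)%E.
Proof. by apply: nneseries_ge0 => i _ _; exact: cost_term_ge0. Qed.

Lemma path_costS p :
  path_cost p = (l (p 0%N) * (d (p 0%N) (p 1%N))%:E + path_cost (p \o succn))%E.
Proof.
rewrite /path_cost nneseries_recl // -nneseries_addn //.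
by congr (_ + _)%E; apply: eq_eseriesr => i _; rewrite addn1.
Qed.

Lemma path_cost_shiftS p j :
  path_cost (fun i => p (i + j)%N) =
  (l (p j) * (d (p j) (p j.+1))%:E + path_cost (fun i => p (i + j.+1)%N))%E.
Proof.
rewrite path_costS; congr (_ + _)%E.
by congr path_cost; apply: funext => i /=; rewrite addSnnS.
Qed.

Lemma path_cost_exit p (t : R) j : 0 <= t ->
  (forall i, (i < j)%N -> (t%:E <= l (p i))%E) ->
  ((t * d (p 0%N) (p j))%:E + path_cost (fun i => p (i + j)%N) <= path_cost p)%E.
Proof.
move=> t0; elim: j => [|j IH] lp.
  by rewrite d_xx mulr0 add0e; under eq_fun do rewrite addn0.
apply: le_trans (IH (fun i ij => lp i (ltnW ij))).
rewrite [path_cost (fun i => p (i + j)%N)]path_cost_shiftS addeA leeD2r //.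
apply: (@le_trans _ _ ((t * d (p 0%N) (p j) + t * d (p j) (p j.+1))%:E)).
  by rewrite lee_fin -mulrDr ler_wpM2l.
by rewrite EFinD leeD2l // EFinM lee_wpmul2r ?lee_fin ?lp.
Qed.

Lemma admissible_shift p j : admissible p -> admissible (fun i => p (i + j)%N).
Proof. by rewrite /admissible -(cvg_shiftn j). Qed.

Lemma admissible_exit_ball p x (t delta : R) : admissible p -> 0 < t ->
  (forall y, d x y < delta -> (t%:E < l y)%E) ->
  exists j, delta <= d x (p j) /\ forall i, (i < j)%N -> (t%:E <= l (p i))%E.
Proof.
move=> lp t0 l_gt_t.
have [N lpN] : exists N, (l (p N) < t%:E)%E.
  apply: contrapT => l_ge_t; suff : (t%:E <= 0)%E by rewrite lee_fin leNgt t0.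
  apply: cvge_ge lp; apply: nearW => n /=.
  by rewrite leNgt; apply/negP => ltn; apply: l_ge_t; exists n.
have exit : exists n, delta <= d x (p n).
  exists N; rewrite leNgt; apply/negP => /l_gt_t lpN'.
  by move: (lt_trans lpN' lpN); rewrite ltxx.
have [j exit_j min_j] := ex_minnP exit.
exists j; split => // i ij; apply/ltW/l_gt_t; rewrite ltNge; apply/negP => /min_j.
by rewrite leqNgt ij.
Qed.

Definition ball_cost x (e : R) : \bar R :=
  ereal_inf [set path_cost p | p in [set p | d x (p 0%N) < e /\ admissible p]].

Definition potential x : \bar R :=
  ereal_sup [set ball_cost x e | e in [set e : R | 0 < e]].

Lemma ball_cost_ge0 x e : (0 <= ball_cost x e)%E.
Proof. by apply: le_ereal_inf_tmp => _ [p _ <-]; exact: path_cost_ge0. Qed.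

Lemma ball_cost_le_potential x e : 0 < e -> (ball_cost x e <= potential x)%E.
Proof. by move=> e0; apply: ereal_sup_ubound; exists e. Qed.

Lemma potential_ge0 x : (0 <= potential x)%E.
Proof. exact: le_trans (ball_cost_ge0 x 1) (ball_cost_le_potential x ltr01). Qed.

Lemma potential_le_path_cost p : admissible p -> (potential (p 0%N) <= path_cost p)%E.
Proof.
move=> lp; apply: ge_ereal_sup => _ [e /= e0 <-].
by apply: ereal_inf_lbound; exists p => //; split; rewrite /= ?d_xx.
Qed.

Lemma potential_le_step x y (r : R) : l x = r%:E ->
  (potential x <= (r * d x y)%:E + potential y)%E.
Proof.
move=> lx; have r0 : 0 <= r by rewrite -lee_fin -lx.
apply: ge_ereal_sup => _ [e /= e0 <-]; apply/lee_addgt0Pr => eta eta0.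
pose rho := eta / (r + 1).
have rho0 : 0 < rho by rewrite divr_gt0 // ltr_wpDl.
have r_rho : r * rho <= eta.
  rewrite /rho mulrA ler_pdivrMr ?ltr_wpDl // mulrDr mulr1 mulrC lerDl.
  exact: ltW.
(* every path starting near [y] can be preceded by [x] *)
have : (ball_cost x e <= (r * (d x y + rho))%:E + ball_cost y rho)%E.
  rewrite -leeBlDl //; apply: le_ereal_inf_tmp => _ [q [q0 lq] <-].
  rewrite leeBlDl //.
  pose xq k := if k is j.+1 then q j else x.
  apply: (@le_trans _ _ (path_cost xq)).
    apply: ereal_inf_lbound; exists xq => //; split; first by rewrite /= d_xx.
    by rewrite /admissible -cvg_shiftS.
  rewrite path_costS lx leeD2r // -EFinM lee_fin ler_wpM2l //.
  by apply: le_trans (d_triangle x y (q 0%N)) _; rewrite lerD2l ltW.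
move/le_trans; apply.
rewrite mulrDr EFinD -!addeA leeD2l // addeC.
by apply: leeD; [exact: ball_cost_le_potential | rewrite lee_fin].
Qed.

Lemma potential_lsc : lsc_metric d potential.
Proof.
move=> x t /ereal_sup_gt [_ [e /= e0 <-] te].
have e20 : 0 < e / 2 by rewrite divr_gt0.
exists (e / 2) => // z xz; apply: lt_le_trans te _.
apply: le_trans _ (ball_cost_le_potential z e20).
apply: le_ereal_inf_tmp => _ [p [zp lp] <-]; apply: ereal_inf_lbound.
exists p => //; split => //; apply: le_lt_trans (d_triangle x z (p 0%N)) _.
by rewrite [e](splitr e) ltrD.
Qed.

Section FiniteCostPath.
Hypothesis l_H0 : H0 d l.

Lemma potential_lty x (r : R) : l x = r%:E -> (potential x < +oo)%E.
Proof.
move=> lx; have [xb [cost_fin lxb]] := l_H0.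
apply: le_lt_trans (potential_le_step (xb 0%N) lx) _.
apply: le_lt_trans (leeD2l _ (potential_le_path_cost lxb)) _.
by apply: lte_add_pinfty; [exact: ltry | exact: cost_fin].
Qed.

Lemma ereal_inf_potential : ereal_inf (range potential) = 0%E.
Proof.
have [xb [cost_fin lxb]] := l_H0.
apply/eqP; rewrite eq_le; apply/andP; split; last first.
  by apply: le_ereal_inf_tmp => _ [x _ <-]; exact: potential_ge0.
apply: cvge_ge (nneseries_tail_cvg cost_fin (fun k _ => cost_term_ge0 xb k)).
apply: nearW => N; rewrite -nneseries_addn //.
apply: (@le_trans _ _ (potential (xb N))).
  by apply: ereal_inf_lbound; exists (xb N).
exact: (potential_le_path_cost (admissible_shift N lxb)).
Qed.

End FiniteCostPath.

Lemma potential_slope_approx x (v t eps : R) : lsc_metric d l ->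
  potential x = v%:E -> 0 < t -> (t%:E < l x)%E -> 0 < eps ->
  exists2 y, y <> x & (((t - eps) * d x y)%:E + potential y < v%:E)%E.
Proof.
move=> l_lsc Ux t0 tlx eps0.
have [delta delta0 l_gt_t] := l_lsc x t tlx.
(* the start offset [eta] and the slack of the path each cost [eps * delta / 2] *)
pose eta := eps * delta / (2 * t).
have eta0 : 0 < eta by rewrite divr_gt0 ?mulr_gt0.
have t_eta : t * eta = eps * delta / 2 by rewrite /eta; field; rewrite gt_eqF.
have : (ball_cost x eta < (v + eps * delta / 2)%:E)%E.
  apply: le_lt_trans (ball_cost_le_potential x eta0) _.
  by rewrite Ux lte_fin ltrDl divr_gt0 ?mulr_gt0.
move=> /ereal_inf_lt [_ [p [xp lp] <-] cost_p].
have [j [exit_j lp_ge_t]] := admissible_exit_ball lp t0 l_gt_t.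
have cost_tail := potential_le_path_cost (admissible_shift j lp).
rewrite add0n in cost_tail.
have cost_pj :
    ((t * d (p 0%N) (p j))%:E + potential (p j) < (v + eps * delta / 2)%:E)%E.
  apply: le_lt_trans cost_p; apply: le_trans (path_cost_exit (ltW t0) lp_ge_t).
  exact: leeD2l.
have pjx : p j <> x by move=> pjx; move: exit_j; rewrite pjx d_xx leNgt delta0.
exists (p j) => //; have := potential_ge0 (p j).
case: (potential (p j)) cost_pj => [w| |] // cost_pj _.
rewrite -!EFinD !lte_fin in cost_pj *.
have := d_triangle x (p 0%N) (p j).
have : eps * delta <= eps * d x (p j) by apply: ler_wpM2l; [exact: ltW|].
have : t * d x (p 0%N) <= t * eta by apply: ler_wpM2l; exact: ltW.
nra.
Qed.

Lemma slope_quotient_le (u : X -> \bar R) x y (v r : R) : y <> x ->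
  u x = v%:E -> 0 <= r -> (u x <= (r * d x y)%:E + u y)%E ->
  (maxe (u x - u y) 0 * ((d x y)^-1)%:E <= r%:E)%E.
Proof.
move=> yx ux r0; rewrite ux; case: (u y) => [w| |] //=; last first.
  by rewrite maxNye mul0e lee_fin.
rewrite -EFinD -EFinB -EFin_max -EFinM !lee_fin => step.
rewrite ler_pdivrMr ?d_gt0 // ge_max mulr_ge0 ?d_ge0 // andbT.
by rewrite lerBlDr.
Qed.

Lemma slope_quotient_gt (u : X -> \bar R) x y (v s : R) : y <> x ->
  u x = v%:E -> ((s * d x y)%:E + u y < v%:E)%E ->
  (s%:E < maxe (u x - u y) 0 * ((d x y)^-1)%:E)%E.
Proof.
move=> yx ux; rewrite ux; case: (u y) => [w| |] //=; last first.
  by rewrite maxEge leey mulyr gtr0_sg ?invr_gt0 ?d_gt0 // mul1e ltry.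
rewrite -EFinD -EFinB -EFin_max -EFinM !lte_fin => step.
by rewrite ltr_pdivlMr ?d_gt0 // lt_max ltrBrDr step.
Qed.

Lemma global_slope_potential_le x : H0 d l -> (global_slope d potential x <= l x)%E.
Proof.
move=> l_H0; rewrite /global_slope.
case lx: (l x) => [r| |]; [|exact: leey|by have := l_ge0 x; rewrite lx].
have r0 : 0 <= r by rewrite -lee_fin -lx.
have [v Ux] : exists v, potential x = v%:E.
  move: (potential_ge0 x) (potential_lty l_H0 lx).
  by case: (potential x) => [v| |] // _ _; exists v.
rewrite Ux; case: eqP => // _.
apply: ge_ereal_sup => _ [[y yx <-] | ->]; last by rewrite lee_fin.
by rewrite -Ux; exact: slope_quotient_le yx Ux r0 (potential_le_step y lx).
Qed.

Lemma global_slope_potential_ge x : lsc_metric d l ->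
  (l x <= global_slope d potential x)%E.
Proof.
move=> l_lsc; rewrite /global_slope; case: eqP => [_|Ux_fin]; first exact: leey.
have [v Ux] : exists v, potential x = v%:E.
  by move: (potential_ge0 x) Ux_fin; case: (potential x) => [v| |] // _ _; exists v.
set S := (_ `|` _); rewrite leNgt; apply/negP => S_lt_lx.
have : (0 <= ereal_sup S)%E by apply: ereal_sup_ubound; right.
case ES: (ereal_sup S) S_lt_lx => [s| |] //; last by rewrite ltNge leey.
rewrite lee_fin => s_lt_lx s0.
have [t st tlx] := EFin_lt_between s_lt_lx.
have t0 : 0 < t by apply: le_lt_trans st.
have ts0 : 0 < (t - s) / 2 by rewrite divr_gt0 // subr_gt0.
have [y yx Uy_lt] := potential_slope_approx l_lsc Ux t0 tlx ts0.
have : (maxe (potential x - potential y) 0 * ((d x y)^-1)%:E <= s%:E)%E.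
  by rewrite -ES; apply: ereal_sup_ubound; left; exists y.
rewrite leNgt => /negP; apply; apply: lt_trans (slope_quotient_gt yx Ux Uy_lt).
by rewrite lte_fin; lra.
Qed.

End CostPotential.

Theorem proposition6p9 (R : realType) (X : Type) (d : X -> X -> R)
  (l : X -> \bar R) :
  is_metric d ->
  (forall x, (0 <= l x)%E) ->
  lsc_metric d l ->
  H0 d l ->
  exists u : X -> \bar R,
    [/\ (forall x, u x <> -oo%E),
        lsc_metric d u,
        ereal_inf (range u) = 0%E &
        (forall x, global_slope d u x = l x)].
Proof.
move=> d_metric l_ge0 l_lsc l_H0; exists (potential d l); split.
- by move=> x Ux; have := potential_ge0 d_metric l_ge0 x; rewrite Ux.
- exact: potential_lsc.
- exact: ereal_inf_potential.
- move=> x; apply/eqP; rewrite eq_le.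
  by rewrite global_slope_potential_le ?global_slope_potential_ge.
Qed.
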